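(* Let $(\mathcal{X},d)$ be a finite metric space, $P$ a probability distribution on $\mathcal{X}$, $k\ge1$ an integer, and $O\in\mathcal{X}_k$ an optimal $k$-RP solution. Then there exists a $k$-multiset $S\in\mathcal{X}_k$ all of whose points have positive probability under $P$ such that $\mathbb{E}_{X\sim P_k}[d_k(S,X)]\le 2\cdot\mathbb{E}_{X\sim P_k}[d_k(O,X)]$.
   Context: $\mathcal{X}_k$ is the set of multisets of exactly $k$ points of $\mathcal{X}$. For $U,V\in\mathcal{X}_k$, $d_k(U,V)$ is the minimum, over perfect matchings between the $k$ elements of $U$ and the $k$ elements of $V$ (with multiplicity), of the sum of the distances of matched pairs. $P_k$ is the distribution of the multiset of $k$ points drawn i.i.d. from $P$. The $k$-RP cost of $S\in\mathcal{X}_k$ is $\mathbb{E}_{X\sim P_k}[d_k(S,X)]$, and an optimal solution $O$ minimizes it over $\mathcal{X}_k$. *)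

From HB Require Import structures.
From mathcomp Require Import all_boot all_order all_algebra all_fingroup.
From mathcomp Require Import reals.
Set Implicit Arguments. Unset Strict Implicit. Unset Printing Implicit Defensive.
Import Order.TTheory GRing.Theory Num.Theory.
Local Open Scope ring_scope.

Definition is_metric (R : realType) (T : finType) (d : T -> T -> R) : Prop :=
  [/\ (forall x y, 0 <= d x y),
      (forall x y, d x y = 0 <-> x = y),
      (forall x y, d x y = d y x) &
      (forall x y z, d x z <= d x y + d y z)].

Definition is_prob (R : realType) (T : finType) (P : T -> R) : Prop :=
  (forall x, 0 <= P x) /\ \sum_(x : T) P x = 1.

(* A k-multiset of points of T is represented by a k-tuple (an ordering of it);
   all quantities below are invariant under reordering. *)
Definition kset (T : finType) (k : nat) := {ffun 'I_k -> T}.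

Definition match_cost (R : realType) (T : finType) (d : T -> T -> R) (k : nat)
  (U V : kset T k) (s : 'S_k) : R :=
  \sum_(i < k) d (U i) (V (s i)).

(* The fold starts from the cost of the identity matching, which is one of the
   candidates, so this is exactly the minimum. *)
Definition dk (R : realType) (T : finType) (d : T -> T -> R) (k : nat)
  (U V : kset T k) : R :=
  \big[Num.min/match_cost d U V 1%g]_(s : 'S_k) match_cost d U V s.

(* E_{X ~ P_k}[d_k(S,X)], X the multiset of k i.i.d. draws from P. *)
Definition kRP_cost (R : realType) (T : finType) (d : T -> T -> R) (P : T -> R)
  (k : nat) (S : kset T k) : R :=
  \sum_(X : kset T k) (\prod_(i < k) P (X i)) * dk d S X.

Definition kRP_optimal (R : realType) (T : finType) (d : T -> T -> R) (P : T -> R)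
  (k : nat) (O : kset T k) : Prop :=
  forall S : kset T k, kRP_cost d P O <= kRP_cost d P S.

From mathcomp Require Import all_boot all_order all_algebra all_fingroup.
From mathcomp Require Import reals.
Import Order.TTheory GRing.Theory Num.Theory.
Set Implicit Arguments.
Unset Strict Implicit.
Unset Printing Implicit Defensive.
Local Open Scope ring_scope.

(* Averaging: d_k satisfies the triangle inequality, so for independent
   X, Y ~ P_k we get E[cost(X)] = E[d_k(X,Y)] <= E[d_k(O,X)] + E[d_k(O,Y)]
   = 2 cost(O).  Some sample X of positive probability is therefore at most
   this mean; its points have positive probability. *)

Lemma exists_le_weighted_mean (R : realDomainType) (I : finType) (w f : I -> R)
    (c : R) :
  (forall i, 0 <= w i) -> \sum_i w i = 1 -> \sum_i w i * f i <= c ->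
  exists i, 0 < w i /\ f i <= c.
Proof.
move=> w_ge0 w_sum1 mean_le.
have [/existsP[i /andP[wi_gt0 fi_le]] | /existsPn no_i] :=
  boolP [exists i, (0 < w i) && (f i <= c)]; first by exists i.
have gap_ge0 i : 0 <= w i * (f i - c).
  have := no_i i; have := w_ge0 i; rewrite le0r => /orP[/eqP-> | wi_gt0].
    by rewrite mul0r.
  by rewrite wi_gt0 -ltNge => c_lt_fi; rewrite mulr_ge0 ?ltW ?subr_gt0.
have gap_sum0 : \sum_i w i * (f i - c) = 0.
  apply/le_anti; rewrite sumr_ge0 // andbT.
  under eq_bigr do rewrite mulrBr.
  by rewrite sumrB -mulr_suml w_sum1 mul1r subr_le0.
have [i /andP[_ wi_gt0]] : exists i, true && (0 < w i).
  by apply: psumr_neq0P => //; rewrite w_sum1; apply/eqP; exact: oner_neq0.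
move: (psumr_eq0P (fun j _ => gap_ge0 j) gap_sum0 (i := i) isT) => /eqP.
rewrite mulf_eq0 gt_eqF //= subr_eq0 => /eqP fi_c.
by have := no_i i; rewrite wi_gt0 fi_c lexx.
Qed.

Section MatchingDistance.
Variables (R : realType) (T : finType) (d : T -> T -> R) (k : nat).

Lemma dk_le_match_cost (U V : kset T k) (s : 'S_k) :
  dk d U V <= match_cost d U V s.
Proof. exact: bigmin_le. Qed.

Lemma dk_attained (U V : kset T k) : exists s, dk d U V = match_cost d U V s.
Proof.
apply: (big_ind (fun x => exists s, x = match_cost d U V s)) => [|x y|s _].
- by exists 1%g.
- by move=> [s ->] [t ->]; rewrite /Num.min; case: ifP; [exists s | exists t].
- by exists s.
Qed.

Hypothesis d_metric : is_metric d.

Lemma dk_triangle (O X Y : kset T k) : dk d X Y <= dk d O X + dk d O Y.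
Proof.
have [_ _ d_sym d_tri] := d_metric.
have [s ->] := dk_attained O X; have [t ->] := dk_attained O Y.
apply: le_trans (dk_le_match_cost X Y (s^-1 * t)%g) _.
rewrite /match_cost -big_split /= (reindex_inj (@perm_inj _ s)) /=.
apply: ler_sum => i _; rewrite permM permK (d_sym (O i)).
exact: d_tri.
Qed.

End MatchingDistance.

Section SampleWeights.
Variables (R : realType) (T : finType) (P : T -> R) (k : nat).

Definition kprob (X : kset T k) : R := \prod_(i < k) P (X i).

Lemma kRP_costE (d : T -> T -> R) (S : kset T k) :
  kRP_cost d P S = \sum_(X : kset T k) kprob X * dk d S X.
Proof. by []. Qed.

Hypothesis P_prob : is_prob P.

Lemma kprob_ge0 X : 0 <= kprob X.
Proof. by apply: prodr_ge0 => i _; case: P_prob. Qed.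

Lemma sum_kprob : \sum_(X : kset T k) kprob X = 1.
Proof.
rewrite -(bigA_distr_bigA (fun (_ : 'I_k) x => P x)) /=.
by case: P_prob => _ ->; rewrite big1.
Qed.

Lemma kprob_gt0 X i : 0 < kprob X -> 0 < P (X i).
Proof.
case: P_prob => P_ge0 _ X_prob_gt0; rewrite lt0r P_ge0 andbT.
apply: contraTneq X_prob_gt0 => PXi0.
by rewrite /kprob (bigD1 i) //= PXi0 mul0r ltxx.
Qed.

End SampleWeights.

Lemma mean_kRP_cost_le (R : realType) (T : finType) (d : T -> T -> R)
    (P : T -> R) (k : nat) (O : kset T k) :
  is_metric d -> is_prob P ->
  \sum_(X : kset T k) kprob P X * kRP_cost d P X <= 2 * kRP_cost d P O.
Proof.
move=> d_metric P_prob; set w := @kprob _ _ P k.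
have w_ge0 X : 0 <= w X by exact: kprob_ge0.
have marginal (g : kset T k -> R) :
    \sum_X \sum_Y w X * w Y * g X = \sum_X w X * g X.
  by apply: eq_bigr => X _; rewrite -big_distrl -big_distrr /= (sum_kprob k P_prob) mulr1.
apply: (@le_trans _ _ (\sum_X \sum_Y w X * w Y * (dk d O X + dk d O Y))).
  apply: ler_sum => X _; rewrite kRP_costE big_distrr /=; apply: ler_sum => Y _.
  by rewrite mulrA ler_wpM2l ?mulr_ge0 ?dk_triangle.
under eq_bigr do (under eq_bigr do rewrite mulrDr; rewrite big_split /=).
rewrite big_split /= marginal exchange_big /=.
under [in X in _ + X]eq_bigr do under eq_bigr do rewrite (mulrC (w _)).
by rewrite marginal mulr_natl mulr2n.
Qed.

Theorem corollary1 (R : realType) (T : finType) (d : T -> T -> R) (P : T -> R)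
  (k : nat) (O : kset T k) :
  is_metric d -> is_prob P -> (0 < k)%N -> kRP_optimal d P O ->
  exists S : kset T k, (forall i, 0 < P (S i)) /\
    kRP_cost d P S <= 2 * kRP_cost d P O.
Proof.
move=> d_metric P_prob _ _.
have [S [S_prob_gt0 S_cost_le]] := exists_le_weighted_mean (kprob_ge0 P_prob)
  (sum_kprob k P_prob) (mean_kRP_cost_le O d_metric P_prob).
by exists S; split=> // i; exact: kprob_gt0 S_prob_gt0.
Qed.
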